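(* Let $X=\{i,j,k\}$ and let $\langle Q,\nu\rangle$ be an MSC on $X$ in which every off-diagonal transition probability $q_{ab}(M)$ ($M\subseteq X$ a menu, $a\ne b\in M$) is strictly positive except $q_{ik}(\{i,k\})=q_{ik}(X)=0$. Write $\rho(M)=\rho(\nu_M,Q(M))$. Then (a) $\dfrac{\rho_i(X)}{\rho_j(X)}>\dfrac{\rho_i(\{i,j\})}{\rho_j(\{i,j\})}$; (b) $\rho_i(X)>\rho_i(\{i,j\})$ if and only if $q_{ki}(X)>q_{ji}(X)$.
   Context: A menu is a nonempty subset of $X$. An MSC (Markov stochastic choice model) $\langle Q,\nu\rangle$ consists of, for every menu $M$, a matrix $Q(M)=(q_{ab}(M))_{a,b\in M}$ with nonnegative entries and a probability distribution $\nu_M$ on $M$, such that for all menus $M$ and distinct $a,b\in M$: (A1) $q_{aa}(M)=1-\sum_{c\neq a}q_{ac}(M)>0$; (A2) if $q_{ab}(\{a,b\})=0$ then $q_{ba}(\{a,b\})>0$; (A3) $q_{ab}(\{a,b\})\,q_{ba}(M)=q_{ba}(\{a,b\})\,q_{ab}(M)$. For a right stochastic matrix $Q$ on $M$ and a distribution $\nu$ on $M$ define $\rho(\nu,Q)=\lim_{\alpha\to0^+}\sum_{t\ge0}\alpha(1-\alpha)^t\nu Q^t$ (the limit exists and satisfies $\rho(\nu,Q)(I-Q)=0$; for irreducible $Q$ it is the unique stationary distribution). *)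

From HB Require Import structures.
From mathcomp Require Import all_boot all_order all_algebra.
From mathcomp Require Import all_classical all_reals all_analysis.
Set Implicit Arguments. Unset Strict Implicit. Unset Printing Implicit Defensive.
Import Order.TTheory GRing.Theory Num.Theory.
Import numFieldNormedType.Exports.
Local Open Scope ring_scope.


Section MSC.
Variables (R : realType) (T : finType).

(* For each menu M, Q M is the matrix
   (q_ab(M))_{a,b in M} (entries with a or b outside M are irrelevant) and
   nu M is the distribution nu_M on M (values outside M irrelevant). *)
Definition menu (M : {set T}) : bool := M != finset.set0.

Definition is_MSC (Q : {set T} -> T -> T -> R) (nu : {set T} -> T -> R) : Prop :=
  forall M : {set T}, menu M ->
    (forall a b, a \in M -> b \in M -> 0 <= Q M a b) /\
    (forall a, a \in M -> 0 <= nu M a) /\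
    (\sum_(a in M) nu M a = 1) /\
    (forall a, a \in M ->
       Q M a a = 1 - \sum_(c in M | c != a) Q M a c /\ 0 < Q M a a) /\
    (forall a b, a \in M -> b \in M -> a != b ->
       Q [set a; b] a b = 0 -> 0 < Q [set a; b] b a) /\
    (forall a b, a \in M -> b \in M -> a != b ->
       Q [set a; b] a b * Q M b a = Q [set a; b] b a * Q M a b).

Fixpoint distQt (M : {set T}) (nu : T -> R) (Q : T -> T -> R) (t : nat) : T -> R :=
  match t with
  | 0%N => nu
  | t'.+1 => fun b => \sum_(a in M) distQt M nu Q t' a * Q a b
  end.

Definition rho (M : {set T}) (nu : T -> R) (Q : T -> T -> R) (a : T) : R :=
  lim ((fun alpha : R =>
          limn (series (fun t : nat => alpha * (1 - alpha) ^+ t * distQt M nu Q t a)))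
       @ 0^'+)%classic.

End MSC.

(* For a stochastic matrix Q on a menu and 0 < al < 1, the Abel mean
   W_al = al * sum_t (1 - al)^t nu Q^t is a probability vector satisfying
   W_al = al nu + (1 - al) W_al Q, so every defect (W_al - W_al Q)_b is at most
   al in absolute value.  If w_a - pi_a is a fixed linear combination of the
   defects of w for every probability vector w, then W_al(a) = pi_a + O(al) and
   rho_a = pi_a.  This identifies rho on two- and three-element menus with the
   stationary distributions given by the Markov chain tree formula.  By (A3) the
   odds of i against j on {i, j} equal q_ji(X) / q_ij(X); with q_ik(X) = 0, (a)
   and (b) then reduce to the signs of q_ij q_jk q_ki and q_ij q_jk (q_ki - q_ji). *)

From mathcomp Require Import all_boot all_order all_algebra.
From mathcomp Require Import all_classical all_reals all_analysis.
From mathcomp Require Import ring lra.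
Set Implicit Arguments. Unset Strict Implicit. Unset Printing Implicit Defensive.
Import Order.TTheory GRing.Theory Num.Theory.
Import numFieldNormedType.Exports.
Local Open Scope ring_scope.

Lemma sum_set2 (V : nmodType) (T : finType) (a b : T) (F : T -> V) :
  a != b -> \sum_(x in [set a; b]) F x = F a + F b.
Proof. by move=> ab; rewrite big_setU1 ?big_set1 // inE. Qed.

Lemma sum_set3 (V : nmodType) (T : finType) (a b c : T) (F : T -> V) :
  a != b -> b != c -> a != c ->
  \sum_(x in [set a; b; c]) F x = F a + (F b + F c).
Proof.
move=> ab bc ac; rewrite -finset.setUA big_setU1 ?sum_set2 // !inE.
by rewrite negb_or ab ac.
Qed.

(* The weight of the spanning trees on {a, b, c} directed towards a: by the
   Markov chain tree theorem, the stationary distribution of a three-state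
   chain is proportional to these weights. *)
Definition tree_weight (R : pzRingType) (T : Type) (Q : T -> T -> R) (a b c : T) : R :=
  Q b a * Q c a + Q b c * Q c a + Q c b * Q b a.

Definition tree_sum (R : pzRingType) (T : Type) (Q : T -> T -> R) (a b c : T) : R :=
  tree_weight Q a b c + tree_weight Q b c a + tree_weight Q c a b.

Lemma tree_sum_rot (R : pzRingType) (T : Type) (Q : T -> T -> R) (a b c : T) :
  tree_sum Q b c a = tree_sum Q a b c.
Proof. by rewrite /tree_sum addrC addrA. Qed.

Lemma share_eq_of_cross_eq (F : fieldType) (x1 x2 y1 y2 : F) :
  x1 + x2 != 0 -> y1 + y2 != 0 -> x1 * y2 = x2 * y1 ->
  x2 / (x1 + x2) = y2 / (y1 + y2).
Proof.
move=> x_neq0 y_neq0 cross; apply/eqP; rewrite eqr_div // -subr_eq0.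
have -> : x2 * (y1 + y2) - y2 * (x1 + x2) = x2 * y1 - x1 * y2 by ring.
by rewrite cross subrr.
Qed.

Section ThreeStateComparison.
Variables (R : realFieldType) (T : Type) (Q : T -> T -> R) (i j k : T).
Hypotheses (Qik0 : Q i k = 0) (Qij_gt0 : 0 < Q i j) (Qji_gt0 : 0 < Q j i).
Hypotheses (Qjk_gt0 : 0 < Q j k) (Qki_gt0 : 0 < Q k i) (Qkj_gt0 : 0 < Q k j).

Lemma tree_weights_gt0 :
  [/\ 0 < tree_weight Q i j k, 0 < tree_weight Q j k i & 0 < tree_weight Q k i j].
Proof.
rewrite /tree_weight Qik0 !(mul0r, mulr0) !(addr0, add0r).
by split; rewrite ?addr_gt0 ?mulr_gt0.
Qed.

Lemma tree_sum_gt0 : 0 < tree_sum Q i j k.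
Proof.
have [wi_gt0 wj_gt0 wk_gt0] := tree_weights_gt0.
by apply: addr_gt0 => //; apply: addr_gt0.
Qed.

Lemma pair_odds_lt_triple_odds :
  (Q j i / (Q i j + Q j i)) / (Q i j / (Q j i + Q i j)) <
  (tree_weight Q i j k / tree_sum Q i j k) / (tree_weight Q j k i / tree_sum Q i j k).
Proof.
have D_gt0 := tree_sum_gt0.
have [wi_gt0 wj_gt0 _] := tree_weights_gt0.
have -> : (Q j i / (Q i j + Q j i)) / (Q i j / (Q j i + Q i j)) = Q j i / Q i j.
  by field; rewrite ?gt_eqF ?addr_gt0.
have -> : (tree_weight Q i j k / tree_sum Q i j k) /
          (tree_weight Q j k i / tree_sum Q i j k) =
          tree_weight Q i j k / tree_weight Q j k i.
  by field; rewrite ?gt_eqF.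
rewrite ltr_pdivrMr // mulrAC ltr_pdivlMr // -subr_gt0.
have -> : tree_weight Q i j k * Q i j - Q j i * tree_weight Q j k i =
          Q i j * Q j k * Q k i.
  by rewrite /tree_weight Qik0; ring.
by rewrite !mulr_gt0.
Qed.

Lemma pair_share_lt_triple_share_iff :
  Q j i / (Q i j + Q j i) < tree_weight Q i j k / tree_sum Q i j k <-> Q j i < Q k i.
Proof.
have D_gt0 := tree_sum_gt0.
rewrite ltr_pdivrMr ?addr_gt0 // mulrAC ltr_pdivlMr // -subr_gt0.
have -> : tree_weight Q i j k * (Q i j + Q j i) - Q j i * tree_sum Q i j k
    = Q i j * Q j k * (Q k i - Q j i) by rewrite /tree_sum /tree_weight Qik0; ring.
by rewrite pmulr_rgt0 ?mulr_gt0 // subr_gt0.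
Qed.

End ThreeStateComparison.

Section AbelMean.
Variables (R : realType) (T : finType) (M : {set T}) (nu : T -> R) (Q : T -> T -> R).
Hypothesis Q_ge0 : forall a b, a \in M -> b \in M -> 0 <= Q a b.
Hypothesis Q_row1 : forall a, a \in M -> \sum_(b in M) Q a b = 1.
Hypothesis nu_ge0 : forall a, a \in M -> 0 <= nu a.
Hypothesis nu_sum1 : \sum_(a in M) nu a = 1.

Local Notation dist := (distQt M nu Q).

Lemma distQt_ge0 t b : b \in M -> 0 <= dist t b.
Proof.
elim: t b => [|t IH] b bM /=; first exact: nu_ge0.
by apply: sumr_ge0 => a aM; rewrite mulr_ge0 ?IH ?Q_ge0.
Qed.

Lemma distQt_sum1 t : \sum_(b in M) dist t b = 1.
Proof.
elim: t => [|t IH] //=; rewrite exchange_big /= -[RHS]IH.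
by apply: eq_bigr => a aM; rewrite -mulr_sumr Q_row1 ?mulr1.
Qed.

Lemma Q_le1 a b : a \in M -> b \in M -> Q a b <= 1.
Proof.
move=> aM bM; rewrite -(Q_row1 aM) (bigD1 b) //= lerDl.
by apply: sumr_ge0 => c /andP[cM _]; exact: Q_ge0.
Qed.

Lemma nu_le1 a : a \in M -> nu a <= 1.
Proof.
move=> aM; rewrite -nu_sum1 (bigD1 a) //= lerDl.
by apply: sumr_ge0 => c /andP[cM _]; exact: nu_ge0.
Qed.

Section FixedDiscount.
Variable al : R.
Hypotheses (al_gt0 : 0 < al) (al_lt1 : al < 1).

Definition abel_term t b := al * (1 - al) ^+ t * dist t b.

Definition abel_partial n b := \sum_(t < n) abel_term t b.

Definition abel_mean b := limn (series (abel_term^~ b)).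

Lemma abel_term_ge0 t b : b \in M -> 0 <= abel_term t b.
Proof.
by move=> bM; rewrite !mulr_ge0 ?exprn_ge0 ?distQt_ge0 ?(ltW al_gt0) // subr_ge0 ltW.
Qed.

Lemma abel_partialS n b : abel_partial n.+1 b = abel_partial n b + abel_term n b.
Proof. exact: big_ord_recr. Qed.

Lemma abel_partial_sum n : \sum_(b in M) abel_partial n b = 1 - (1 - al) ^+ n.
Proof.
elim: n => [|n IH]; first by rewrite subrr big1 // => b _; rewrite /abel_partial big_ord0.
under eq_bigr do rewrite abel_partialS.
by rewrite big_split /= IH -mulr_sumr distQt_sum1 exprS; ring.
Qed.

Lemma abel_partial_le1 n b : b \in M -> abel_partial n b <= 1.
Proof.
move=> bM; apply: (@le_trans _ _ (\sum_(c in M) abel_partial n c)).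
  rewrite (bigD1 b) //= lerDl; apply: sumr_ge0 => c /andP[cM _].
  by apply: sumr_ge0 => t _; exact: abel_term_ge0.
by rewrite abel_partial_sum lerBlDr lerDl exprn_ge0 // subr_ge0 ltW.
Qed.

Lemma abel_partial_rec n b :
  abel_partial n.+1 b = al * nu b + (1 - al) * \sum_(a in M) abel_partial n a * Q a b.
Proof.
elim: n => [|n IH].
  rewrite abel_partialS big1 => [|a _]; last by rewrite /abel_partial big_ord0 mul0r.
  by rewrite /abel_partial /abel_term big_ord0 /=; ring.
rewrite abel_partialS IH.
under [in RHS]eq_bigr do rewrite abel_partialS mulrDl.
rewrite big_split mulrDr -addrA /abel_term /=; congr (_ + (_ + _)).
by rewrite !mulr_sumr; apply: eq_bigr => a _; rewrite exprS; ring.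
Qed.

Lemma abel_partial_cvg b : b \in M ->
  (abel_partial n b @[n --> \oo] --> abel_mean b)%classic.
Proof.
move=> bM; rewrite /abel_mean; have -> : series (abel_term^~ b) = abel_partial^~ b.
  by apply/funext => n; rewrite /series /= big_mkord.
apply: nondecreasing_is_cvgn.
  by apply/nondecreasing_seqP => n; rewrite abel_partialS lerDl abel_term_ge0.
by exists 1 => _ [n _ <-]; exact: abel_partial_le1.
Qed.

Lemma abel_mean_ge0 b : b \in M -> 0 <= abel_mean b.
Proof.
move=> bM; apply: (closed_cvg (fun x : R => 0 <= x) _ _ _ (abel_partial_cvg bM)).
  exact: closed_ge.
by apply: nearW => n; apply: sumr_ge0 => t _; exact: abel_term_ge0.
Qed.

Lemma abel_mean_sum1 : \sum_(b in M) abel_mean b = 1.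
Proof.
have sum_cvg : (\sum_(b in M) abel_partial n b @[n --> \oo] -->
                \sum_(b in M) abel_mean b)%classic.
  by apply: cvg_big; [exact: add_continuous | exact: abel_partial_cvg].
have one_cvg : (\sum_(b in M) abel_partial n b @[n --> \oo] --> (1 : R))%classic.
  under eq_cvg do rewrite abel_partial_sum.
  have geo : ((1 - al) ^+ n @[n --> \oo] --> (0 : R))%classic.
    by apply: cvg_expr; rewrite ger0_norm ?subr_ge0 ?(ltW al_lt1) // ltrBlDr ltrDl.
  by have := cvgB (cvg_cst (1 : R)) geo; rewrite subr0; apply.
by rewrite -(cvg_lim _ sum_cvg) // (cvg_lim _ one_cvg).
Qed.

Lemma abel_mean_fixpoint b : b \in M ->
  abel_mean b = al * nu b + (1 - al) * \sum_(a in M) abel_mean a * Q a b.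
Proof.
move=> bM.
have rec_cvg : (abel_partial n.+1 b @[n --> \oo] -->
                al * nu b + (1 - al) * \sum_(a in M) abel_mean a * Q a b)%classic.
  under eq_cvg do rewrite abel_partial_rec.
  apply: cvgD; first exact: cvg_cst.
  apply: cvgMl_tmp; apply: cvg_big; first exact: add_continuous.
  by move=> a aM; apply: cvgMr_tmp; exact: abel_partial_cvg.
have := abel_partial_cvg bM; rewrite -cvg_shiftS => shift_cvg.
by rewrite -(cvg_lim _ shift_cvg) // (cvg_lim _ rec_cvg).
Qed.

Lemma abel_mean_defect b : b \in M ->
  `|abel_mean b - \sum_(a in M) abel_mean a * Q a b| <= al.
Proof.
move=> bM; set s := \sum_(a in M) _.
have s_ge0 : 0 <= s.
  by apply: sumr_ge0 => a aM; rewrite mulr_ge0 ?abel_mean_ge0 ?Q_ge0.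
have s_le1 : s <= 1.
  rewrite -abel_mean_sum1; apply: ler_sum => a aM.
  by rewrite ler_piMr ?abel_mean_ge0 ?Q_le1.
have -> : abel_mean b - s = al * (nu b - s) by rewrite {1}abel_mean_fixpoint // -/s; ring.
rewrite normrM gtr0_norm // ler_piMr ?(ltW al_gt0) // ler_norml.
by have := nu_ge0 bM; have := nu_le1 bM; lra.
Qed.

End FixedDiscount.

Lemma rho_eq_of_defect_identity (a : T) (L : R) (c : T -> R) :
  (forall w : T -> R, \sum_(b in M) w b = 1 ->
     w a - L = \sum_(b in M) c b * (w b - \sum_(x in M) w x * Q x b)) ->
  rho M nu Q a = L.
Proof.
move=> identity; set K := \sum_(b in M) `|c b|.
have K_ge0 : 0 <= K by apply: sumr_ge0.
have bound al : 0 < al -> al < 1 -> `|abel_mean al a - L| <= K * al.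
  move=> al_gt0 al_lt1; rewrite identity ?abel_mean_sum1 // /K mulr_suml.
  apply: (le_trans (ler_norm_sum _ _ _)); apply: ler_sum => b bM.
  by rewrite normrM ler_wpM2l ?abel_mean_defect.
rewrite /rho; apply: cvg_lim => //; apply/cvgrPdist_le => e e_gt0.
near=> al.
have al_gt0 : 0 < al by near: al; exact: nbhs_right_gt.
have al_lt1 : al < 1 by near: al; exact: nbhs_right_lt.
have al_small : al < e / (K + 1).
  by near: al; apply: nbhs_right_lt; rewrite divr_gt0 // ltr_pwDr.
rewrite distrC; apply: (le_trans (bound al al_gt0 al_lt1)).
rewrite ltr_pdivlMr ?ltr_pwDr // in al_small.
by apply: (le_trans _ (ltW al_small)); rewrite mulrDr mulr1 mulrC lerDl ltW.
Unshelve. all: by end_near.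
Qed.

Lemma rho_pair a b : a != b -> M = [set a; b] -> Q a b + Q b a != 0 ->
  rho M nu Q a = Q b a / (Q a b + Q b a).
Proof.
move=> ab M2 s_neq0; have aM : a \in M by rewrite M2 !inE eqxx.
have row_a : Q a a + Q a b = 1 by rewrite -(Q_row1 aM) M2 sum_set2.
apply: (rho_eq_of_defect_identity
          (c := fun x => if x == a then (Q a b + Q b a)^-1 else 0)) => w.
rewrite M2 !sum_set2 // eqxx eq_sym (negbTE ab) => w_sum.
have -> : w b = 1 - w a by lra.
have -> : Q a a = 1 - Q a b by lra.
by field.
Qed.

Lemma rho_triple a b c : a != b -> b != c -> a != c -> M = [set a; b; c] ->
  tree_sum Q a b c != 0 -> rho M nu Q a = tree_weight Q a b c / tree_sum Q a b c.
Proof.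
move=> ab bc ac M3 D_neq0; set D := tree_sum Q a b c.
have aM : a \in M by rewrite M3 !inE eqxx.
have bM : b \in M by rewrite M3 !inE eqxx orbT.
have row_a : Q a a + (Q a b + Q a c) = 1 by rewrite -(Q_row1 aM) M3 sum_set3.
have row_b : Q b a + (Q b b + Q b c) = 1 by rewrite -(Q_row1 bM) M3 sum_set3.
(* (c_a, c_b, 0) solves (I - Q) c = e_a - pi_a 1 with pi_a the tree formula. *)
apply: (rho_eq_of_defect_identity (c := fun x =>
  if x == a then (Q b a + Q b c + Q c b) / D
  else if x == b then (Q b a - Q c a) / D else 0)) => w.
rewrite M3 !sum_set3 // (eq_sym b a) (eq_sym c a) (eq_sym c b).
rewrite (negbTE ab) (negbTE ac) (negbTE bc) !eqxx => w_sum.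
have -> : w c = 1 - w a - w b by lra.
have -> : Q a a = 1 - Q a b - Q a c by lra.
have -> : Q b b = 1 - Q b a - Q b c by lra.
by rewrite /D /tree_sum /tree_weight in D_neq0 *; field.
Qed.

End AbelMean.

Lemma is_MSC_stochastic (R : realType) (T : finType) (Q : {set T} -> T -> T -> R)
    (nu : {set T} -> T -> R) (M : {set T}) :
  is_MSC Q nu -> menu M ->
  [/\ forall a b, a \in M -> b \in M -> 0 <= Q M a b,
      forall a, a \in M -> \sum_(b in M) Q M a b = 1,
      forall a, a \in M -> 0 <= nu M a &
      \sum_(a in M) nu M a = 1].
Proof.
move=> msc menuM; have [Q_ge0 [nu_ge0 [nu_sum1 [diag _]]]] := msc M menuM.
split=> // a aM; rewrite (bigD1 a) //=.
by have [-> _] := diag a aM; rewrite subrK.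
Qed.

Lemma msc_rho_pair (R : realType) (T : finType) (Q : {set T} -> T -> T -> R)
    (nu : {set T} -> T -> R) (M N : {set T}) (a b : T) :
  is_MSC Q nu -> a \in M -> b \in M -> a != b -> N = [set a; b] ->
  0 < Q N a b -> 0 < Q M a b ->
  rho N (nu N) (Q N) a = Q M b a / (Q M a b + Q M b a).
Proof.
move=> msc aM bM ab N2 QN_gt0 QM_gt0.
have menuN : menu N by apply/set0Pn; exists a; rewrite N2 !inE eqxx.
have menuM : menu M by apply/set0Pn; exists a.
have [gN rN nN sN] := is_MSC_stochastic msc menuN.
have [gM _ _ _] := is_MSC_stochastic msc menuM.
have [_ [_ [_ [_ [_ cross]]]]] := msc M menuM.
have [aN bN] : a \in N /\ b \in N by rewrite N2 !inE !eqxx orbT.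
have sN_gt0 : 0 < Q N a b + Q N b a by have := gN b a bN aN; lra.
have sM_gt0 : 0 < Q M a b + Q M b a by have := gM b a bM aM; lra.
rewrite (rho_pair gN rN nN sN ab N2) ?gt_eqF //.
by apply: share_eq_of_cross_eq; rewrite ?gt_eqF // N2 cross.
Qed.

Lemma msc_rho_triple (R : realType) (T : finType) (Q : {set T} -> T -> T -> R)
    (nu : {set T} -> T -> R) (M : {set T}) (a b c : T) :
  is_MSC Q nu -> a != b -> b != c -> a != c -> M = [set a; b; c] ->
  tree_sum (Q M) a b c != 0 ->
  rho M (nu M) (Q M) a = tree_weight (Q M) a b c / tree_sum (Q M) a b c.
Proof.
move=> msc ab bc ac M3.
have menuM : menu M by apply/set0Pn; exists a; rewrite M3 !inE eqxx.
have [gM rM nM sM] := is_MSC_stochastic msc menuM.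
exact: rho_triple.
Qed.

Theorem mainTheorem13 (R : realType) (T : finType) (i j k : T)
  (Q : {set T} -> T -> T -> R) (nu : {set T} -> T -> R) :
  i != j -> j != k -> i != k ->
  [set: T] = [set i; j; k] ->
  is_MSC Q nu ->
  (forall (M : {set T}) (a b : T), menu M -> a \in M -> b \in M -> a != b ->
     ~ (a = i /\ b = k /\ (M = [set i; k] \/ M = [set: T])) ->
     0 < Q M a b) ->
  Q [set i; k] i k = 0 ->
  Q [set: T] i k = 0 ->
  let rhoM M := rho M (nu M) (Q M) in
  (rhoM [set i; j] i / rhoM [set i; j] j < rhoM [set: T] i / rhoM [set: T] j) /\
  (rhoM [set i; j] i < rhoM [set: T] i <-> Q [set: T] j i < Q [set: T] k i).
Proof.
move=> ij jk ik setT3 msc Q_pos _ QXik0 rhoM.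
have pos (M : {set T}) a b :
    a \in M -> b \in M -> a != b -> (a != i) || (b != k) -> 0 < Q M a b.
  move=> aM bM ab ab_ik; apply: Q_pos => //; first by apply/set0Pn; exists a.
  by case=> ai [bk _]; move: ab_ik; rewrite ai bk !eqxx.
have [ji ki] : j != i /\ k != i by rewrite ![_ == i]eq_sym.
have [Q2ij Q2ji] : 0 < Q [set i; j] i j /\ 0 < Q [set i; j] j i.
  by split; apply: pos; rewrite ?inE ?eqxx ?orbT ?ij ?ji ?jk.
have [QXij QXji QXjk QXki QXkj] : [/\ 0 < Q [set: T] i j, 0 < Q [set: T] j i,
    0 < Q [set: T] j k, 0 < Q [set: T] k i & 0 < Q [set: T] k j].
  by split; apply: pos; rewrite ?inE ?ij ?ji ?jk ?ki ?(eq_sym k j) ?orbT.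
have D_gt0 := tree_sum_gt0 QXik0 QXij QXji QXjk QXki QXkj.
have set_ji : [set i; j] = [set j; i] by rewrite finset.setUC.
have setT_jki : [set: T] = [set j; k; i].
  by rewrite setT3; apply/setP => x; rewrite !inE [RHS]orbC orbA.
rewrite /rhoM (msc_rho_pair msc _ _ ij erefl Q2ij QXij) ?inE //.
rewrite (msc_rho_pair msc _ _ ji set_ji Q2ji QXji) ?inE //.
rewrite (msc_rho_triple msc ij jk ik setT3) ?gt_eqF //.
rewrite (msc_rho_triple msc jk ki ji setT_jki) (tree_sum_rot (Q [set: T]) i j k)
  ?gt_eqF //.
by split; [exact: pair_odds_lt_triple_odds | exact: pair_share_lt_triple_share_iff].
Qed.
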